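(* Let $E$ be a Banach lattice. Then the identity operator on $E$ is $uaw$-Dunford-Pettis if and only if $E$ is finite dimensional.
   Context: A net $(x_\alpha)$ in a Banach lattice $E$ is $uaw$-convergent to $x$ if $|x_\alpha-x|\wedge u\to 0$ weakly for every $u\in E_+$. A bounded operator $T\colon E\to E$ is $uaw$-Dunford-Pettis if every norm bounded $uaw$-null sequence $(x_n)$ in $E$ satisfies $\|Tx_n\|\to 0$. *)

From HB Require Import structures.
From mathcomp Require Import all_boot all_order all_algebra.
From mathcomp Require Import all_classical all_reals all_analysis.
Set Implicit Arguments. Unset Strict Implicit. Unset Printing Implicit Defensive.
Import Order.TTheory GRing.Theory Num.Theory.
Import numFieldNormedType.Exports.
Local Open Scope classical_set_scope.
Local Open Scope ring_scope.

Section BanachLattice.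
Variables (R : realType) (E : completeNormedModType R).
Variables (le : E -> E -> Prop) (join : E -> E -> E).

Definition lmeet (x y : E) : E := - join (- x) (- y).
Definition labs (x : E) : E := join x (- x).

Definition is_banach_lattice : Prop :=
  (forall x, le x x) /\
      (forall x y, le x y -> le y x -> x = y) /\
      (forall x y z, le x y -> le y z -> le x z) /\
      (forall x y z, le x y -> le (x + z) (y + z)) /\
      (forall (a : R) x y, 0 <= a -> le x y -> le (a *: x) (a *: y)) /\
      (forall x y, le x (join x y) /\ le y (join x y) /\
                   forall z, le x z -> le y z -> le (join x y) z) /\
      (forall x y, le (labs x) (labs y) -> `|x| <= `|y|).

Definition weakly_cvg (x : nat -> E) (l : E) : Prop :=
  forall f : E -> R,
    (forall u v, f (u + v) = f u + f v) ->
    (forall (a : R) u, f (a *: u) = a * f u) ->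
    continuous f ->
    (fun n => f (x n)) @ \oo --> f l.

Definition uaw_cvg (x : nat -> E) (l : E) : Prop :=
  forall u : E, le 0 u -> weakly_cvg (fun n => lmeet (labs (x n - l)) u) 0.

Definition norm_bounded (x : nat -> E) : Prop :=
  exists M : R, forall n, `|x n| <= M.

Definition uaw_dunford_pettis (T : E -> E) : Prop :=
  forall x : nat -> E, norm_bounded x -> uaw_cvg x 0 ->
    (fun n => `|T (x n)|) @ \oo --> (0 : R).

Definition finite_dimensional : Prop :=
  exists (n : nat) (b : 'I_n -> E),
    forall x : E, exists c : 'I_n -> R, x = \sum_(i < n) c i *: b i.

End BanachLattice.

(* A disjoint sequence of positive unit vectors is uaw-null: for [u >= 0] and a
   continuous functional [f], the pieces [d n ∧ u] are disjoint and lie below [u],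
   so [sum_n |f (d n ∧ u)| <= ||f|| ||u||].  Hence if the identity is
   uaw-Dunford-Pettis, [E] has no infinite disjoint sequence; the same holds in
   finite dimension, since disjoint positive vectors are linearly independent.
   Without infinite disjoint sequences every positive element lies above an atom
   (an atomless one could be split forever), so a maximal disjoint family of atoms
   is finite and spans [E], and [E] is finite dimensional.  Conversely, along such a
   family [a_i] the coordinate functionals are continuous; a bounded sequence
   satisfies [|x n| <= C u] with [u = sum_i a_i / ||a_i||], whence
   [||x n|| <= C mass (|x n| ∧ u)] for the positive continuous functional
   [mass = sum_i ||a_i|| coord_i], and the right-hand side tends to 0 when
   [x n] is uaw-null. *)
From HB Require Import structures.
From mathcomp Require Import all_boot all_order all_algebra.
From mathcomp Require Import all_classical all_reals all_analysis.
From mathcomp Require Import ring lra.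
Import Order.TTheory GRing.Theory Num.Theory.
Import numFieldNormedType.Exports.
Local Open Scope classical_set_scope.
Local Open Scope ring_scope.

Section LinearFunctional.
Context {R : realType} {E : normedModType R} {f : E -> R}.
Hypotheses (fD : forall u v, f (u + v) = f u + f v)
  (fZ : forall (a : R) u, f (a *: u) = a * f u).

Let f_linear : linear_for *:%R (f : E -> R^o).
Proof. by move=> a u v; rewrite fD fZ. Qed.

Let flin : {linear E -> R^o} :=
  HB.pack (f : E -> R^o) (GRing.isLinear.Build _ _ _ _ _ f_linear).

Lemma functional0 : f 0 = 0.
Proof. exact: (linear0 flin). Qed.

Lemma functional_sum (I : Type) (r : seq I) (P : pred I) (F : I -> E) :
  f (\sum_(i <- r | P i) F i) = \sum_(i <- r | P i) f (F i).
Proof. exact: (linear_sum flin). Qed.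

Lemma continuous_functional_bounded :
  continuous f -> exists2 C : R, 0 <= C & forall z, `|f z| <= C * `|z|.
Proof.
move=> /(linear_bounded_continuous flin) /linear_boundedP fB.
near +oo_R => C; exists C; first by near: C; apply: nbhs_pinfty_ge; rewrite num_real.
by near: C.
Unshelve. all: by end_near.
Qed.

Lemma bounded_functional_continuous :
  (exists C : R, forall z, `|f z| <= C * `|z|) -> continuous f.
Proof.
move=> [C fC]; apply/(linear_bounded_continuous flin)/linear_boundedP.
near=> r => z; apply: le_trans (fC z) _.
by rewrite ler_wpM2r //; near: r; apply: nbhs_pinfty_ge; rewrite num_real.
Unshelve. all: by end_near.
Qed.

End LinearFunctional.

Lemma span_dependent {K : fieldType} {V : lmodType K} {n} (b : 'I_n -> V)
    (d : 'I_n.+1 -> V) :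
  (forall i, exists c : 'I_n -> K, d i = \sum_(j < n) c j *: b j) ->
  exists2 w : 'rV[K]_n.+1, w != 0 & \sum_i w 0 i *: d i = 0.
Proof.
move=> /(_ _)/cid dP; pose C := \matrix_(i < n.+1, j < n) projT1 (dP i) j.
have /rowV0Pn [w /sub_kermxP wC wn0] : kermx C != 0.
  by rewrite -mxrank_eq0 mxrank_ker -lt0n subn_gt0 ltnS rank_leq_col.
exists w => //; under eq_bigr => m _ do rewrite (projT2 (dP m)) scaler_sumr.
rewrite exchange_big big1 // => j _; have /matrixP/(_ 0 j) := wC; rewrite !mxE => wCj.
rewrite -[RHS](scale0r (b j)) -wCj scaler_suml.
by apply: eq_bigr => m _; rewrite scalerA mxE.
Qed.

Lemma nonneg_bounded_series_cvg0 (R : realType) (u : R ^nat) :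
  (forall n, 0 <= u n) -> (exists B, forall N, \sum_(k < N) u k <= B) ->
  u @ \oo --> 0.
Proof.
move=> u0 [B uB]; apply: cvg_series_cvg_0; apply: nondecreasing_is_cvgn.
  by apply: nondecreasing_series => n _ _; apply: u0.
by exists B => _ [N _ <-]; rewrite /series /= big_mkord; apply: uB.
Qed.

(** * Calculus in a Banach lattice *)

Section VectorLattice.
Context {R : realType} {E : completeNormedModType R}.
Context {le : E -> E -> Prop} {join : E -> E -> E}.
Hypothesis HB : is_banach_lattice le join.

Local Notation "x ⊑ y" := (le x y) (at level 70, no associativity).
Local Notation meet := (lmeet join).
Local Notation abs := (labs join).

Lemma vle_refl x : x ⊑ x.
Proof. by case: HB => + _; apply. Qed.

Lemma vle_anti x y : x ⊑ y -> y ⊑ x -> x = y.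
Proof. by case: HB => _ [+ _]; apply. Qed.

Lemma vle_trans [y x z] : x ⊑ y -> y ⊑ z -> x ⊑ z.
Proof. by case: HB => _ [_ [+ _]]; apply. Qed.

Lemma vleD2r z x y : x ⊑ y -> x + z ⊑ y + z.
Proof. by case: HB => _ [_ [_ [+ _]]]; apply. Qed.

Lemma vleZ2l (a : R) x y : 0 <= a -> x ⊑ y -> a *: x ⊑ a *: y.
Proof. by case: HB => _ [_ [_ [_ [+ _]]]]; apply. Qed.

Lemma vleUl x y : x ⊑ join x y.
Proof. by case: HB => _ [_ [_ [_ [_ [/(_ x y) [+ _] _]]]]]; apply. Qed.

Lemma vleUr x y : y ⊑ join x y.
Proof. by case: HB => _ [_ [_ [_ [_ [/(_ x y) [_ [+ _]] _]]]]]; apply. Qed.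

Lemma vleUx x y z : x ⊑ z -> y ⊑ z -> join x y ⊑ z.
Proof. by case: HB => _ [_ [_ [_ [_ [/(_ x y) [_ [_ +]] _]]]]]; apply. Qed.

Lemma normr_vle_labs x y : abs x ⊑ abs y -> `|x| <= `|y|.
Proof. by case: HB => _ [_ [_ [_ [_ [_ +]]]]]; apply. Qed.

Lemma vleD2l z x y : x ⊑ y -> z + x ⊑ z + y.
Proof. by rewrite ![z + _]addrC; apply: vleD2r. Qed.

Lemma vleD x y z w : x ⊑ y -> z ⊑ w -> x + z ⊑ y + w.
Proof. by move=> xy zw; apply: (vle_trans (y := y + z)); [apply: vleD2r|apply: vleD2l]. Qed.

Lemma vsubr_ge0 x y : (0 ⊑ y - x) <-> (x ⊑ y).
Proof.
split=> [/(vleD2r x)|/(vleD2r (- x))]; last by rewrite subrr.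
by rewrite add0r subrK.
Qed.

Lemma vsubr_le0 x y : (x - y ⊑ 0) <-> (x ⊑ y).
Proof.
split=> [/(vleD2r y)|/(vleD2r (- y))]; last by rewrite subrr.
by rewrite add0r subrK.
Qed.

Lemma vleN2 x y : x ⊑ y -> - y ⊑ - x.
Proof. by move=> /vsubr_ge0 xy; apply/vsubr_ge0; rewrite opprK addrC. Qed.

Lemma vleN2E x y : (- y ⊑ - x) <-> (x ⊑ y).
Proof. by split=> [/vleN2|/vleN2//]; rewrite !opprK. Qed.

Lemma vaddr_ge0 x y : 0 ⊑ x -> 0 ⊑ y -> 0 ⊑ x + y.
Proof. by move=> x0 y0; rewrite -[0]addr0; apply: vleD. Qed.

Lemma vscaler_ge0 (a : R) x : 0 <= a -> 0 ⊑ x -> 0 ⊑ a *: x.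
Proof. by move=> a0 x0; rewrite -(scaler0 _ a); apply: vleZ2l. Qed.

Lemma vleZ2r (s r : R) x : 0 ⊑ x -> s <= r -> s *: x ⊑ r *: x.
Proof.
move=> x0 sr; apply/vsubr_ge0; rewrite -scalerBl.
by apply: vscaler_ge0; rewrite ?subr_ge0.
Qed.

Lemma vle_sum (I : Type) (r : seq I) (P : pred I) (F G : I -> E) :
  (forall i, P i -> F i ⊑ G i) ->
  \sum_(i <- r | P i) F i ⊑ \sum_(i <- r | P i) G i.
Proof. by move=> FG; apply: big_ind2 => //; [apply: vle_refl|apply: vleD]. Qed.

Lemma vsumr_ge0 (I : Type) (r : seq I) (P : pred I) (F : I -> E) :
  (forall i, P i -> 0 ⊑ F i) -> 0 ⊑ \sum_(i <- r | P i) F i.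
Proof. by move=> F0; apply: big_ind => //; [apply: vle_refl|apply: vaddr_ge0]. Qed.

Lemma vle_sum_term {I : finType} {F : I -> E} j :
  (forall i, 0 ⊑ F i) -> F j ⊑ \sum_i F i.
Proof.
move=> F0; rewrite (bigD1 j) //= -[X in X ⊑ _]addr0.
by apply: vleD2l; apply: vsumr_ge0.
Qed.

Lemma ljoin_r {x y} : x ⊑ y -> join x y = y.
Proof. by move=> xy; apply: vle_anti; [apply: vleUx => //; apply: vle_refl|apply: vleUr]. Qed.

Lemma ljoin_l {x y} : y ⊑ x -> join x y = x.
Proof. by move=> yx; apply: vle_anti; [apply: vleUx => //; apply: vle_refl|apply: vleUl]. Qed.

Lemma ljoinC x y : join x y = join y x.
Proof. by apply: vle_anti; apply: vleUx; (apply: vleUl || apply: vleUr). Qed.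

Lemma vle_join2 x y x' y' : x ⊑ x' -> y ⊑ y' -> join x y ⊑ join x' y'.
Proof.
by move=> xx yy; apply: vleUx; [apply: vle_trans xx (vleUl _ _)|apply: vle_trans yy (vleUr _ _)].
Qed.

Lemma ljoinDr z x y : join (x + z) (y + z) = join x y + z.
Proof.
apply: vle_anti; first by apply: vleUx; apply: vleD2r; [apply: vleUl|apply: vleUr].
rewrite -[join (x + z) _](subrK z); apply: vleD2r.
by apply: vleUx; rewrite -[X in X ⊑ _](addrK z); apply: vleD2r; [apply: vleUl|apply: vleUr].
Qed.

Lemma ljoinZ (a : R) x y : 0 <= a -> join (a *: x) (a *: y) = a *: join x y.
Proof.
rewrite le_eqVlt => /orP[/eqP <-|a0]; first by rewrite !scale0r ljoin_r //; apply: vle_refl.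
apply: vle_anti.
  by apply: vleUx; apply: vleZ2l; rewrite ?ltW //; [apply: vleUl|apply: vleUr].
rewrite -[join (a *: x) _](scalerKV (lt0r_neq0 a0)); apply: vleZ2l; first exact: ltW.
by apply: vleUx; rewrite -[X in X ⊑ _](scalerK (lt0r_neq0 a0));
  apply: vleZ2l; rewrite ?invr_ge0 ?ltW //; [apply: vleUl|apply: vleUr].
Qed.

Lemma vleIl x y : meet x y ⊑ x.
Proof. by apply/vleN2E; rewrite opprK; apply: vleUl. Qed.

Lemma vleIr x y : meet x y ⊑ y.
Proof. by apply/vleN2E; rewrite opprK; apply: vleUr. Qed.

Lemma vlexI x y z : z ⊑ x -> z ⊑ y -> z ⊑ meet x y.
Proof. by move=> zx zy; apply/vleN2E; rewrite opprK; apply: vleUx; apply: vleN2. Qed.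

Lemma lmeetC x y : meet x y = meet y x.
Proof. by rewrite /lmeet ljoinC. Qed.

Lemma lmeet_l {x y} : x ⊑ y -> meet x y = x.
Proof. by move=> xy; apply: vle_anti; [apply: vleIl|apply: vlexI => //; apply: vle_refl]. Qed.

Lemma vle_meet2 x y x' y' : x ⊑ x' -> y ⊑ y' -> meet x y ⊑ meet x' y'.
Proof.
by move=> xx yy; apply: vlexI; [apply: vle_trans (vleIl _ _) xx|apply: vle_trans (vleIr _ _) yy].
Qed.

Lemma lmeetDr z x y : meet (x + z) (y + z) = meet x y + z.
Proof. by rewrite /lmeet !opprD ljoinDr opprD opprK. Qed.

Lemma lmeetZ (a : R) x y : 0 <= a -> meet (a *: x) (a *: y) = a *: meet x y.
Proof. by move=> a0; rewrite /lmeet -!scalerN ljoinZ // scalerN. Qed.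

Lemma ljoin_lmeet x y : join x y + meet x y = x + y.
Proof.
have xyN : join (- x) (- y) + (x + y) = join y x.
  by rewrite -ljoinDr addrA addNr add0r addrCA addNr addr0.
by rewrite /lmeet (ljoinC x y) -xyN addrAC subrr add0r.
Qed.

Lemma vle_meetDl a b c : 0 ⊑ a -> 0 ⊑ b -> 0 ⊑ c ->
  meet (a + b) c ⊑ meet a c + meet b c.
Proof.
move=> a0 b0 c0; rewrite -lmeetDr; apply: vlexI.
  rewrite [a + meet _ _]addrC -lmeetDr [b + a]addrC; apply: vle_meet2; first exact: vle_refl.
  by rewrite -[X in X ⊑ _]addr0; apply: vleD2l.
rewrite [c + _]addrC -lmeetDr.
by apply: vlexI; apply: vle_trans (vleIr _ _) _;
  rewrite -[X in X ⊑ _]add0r; apply: vleD2r.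
Qed.

Lemma labs_ge x : x ⊑ abs x.
Proof. exact: vleUl. Qed.

Lemma labsN_ge x : - x ⊑ abs x.
Proof. exact: vleUr. Qed.

Lemma labs_le x z : x ⊑ z -> - x ⊑ z -> abs x ⊑ z.
Proof. exact: vleUx. Qed.

Lemma labs_ge0 x : 0 ⊑ abs x.
Proof.
have x2 : 0 ⊑ abs x + abs x by rewrite -(subrr x) addrC; apply: vleD; [apply: labsN_ge|apply: labs_ge].
have -> : abs x = 2^-1 *: (abs x + abs x).
  by rewrite -mulr2n -[abs x *+ 2]scaler_nat scalerA mulVf ?pnatr_eq0 // scale1r.
by apply: vscaler_ge0; rewrite ?invr_ge0.
Qed.

Lemma labs_id {x} : 0 ⊑ x -> abs x = x.
Proof. by move=> x0; apply: ljoin_l; apply: (vle_trans (y := 0)) => //; rewrite -oppr0; apply: vleN2. Qed.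

Lemma labsN x : abs (- x) = abs x.
Proof. by rewrite /labs opprK ljoinC. Qed.

Lemma labsZ (s : R) x : 0 ⊑ x -> abs (s *: x) = `|s| *: x.
Proof.
move=> x0; have [s0|s0] := leP 0 s; first by rewrite ger0_norm // labs_id //; apply: vscaler_ge0.
rewrite ltr0_norm // -labsN -scaleNr labs_id //.
by apply: vscaler_ge0; rewrite // oppr_ge0 ltW.
Qed.

Lemma labs_add x y : abs (x + y) ⊑ abs x + abs y.
Proof.
apply: labs_le; first by apply: vleD; apply: labs_ge.
by rewrite opprD; apply: vleD; apply: labsN_ge.
Qed.

Lemma normr_labs x : `|abs x| = `|x|.
Proof.
have absK : abs (abs x) = abs x by rewrite labs_id //; apply: labs_ge0.
by apply/eqP; rewrite eq_le !normr_vle_labs // absK; apply: vle_refl.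
Qed.

Lemma normr_vle {a b} : 0 ⊑ a -> a ⊑ b -> `|a| <= `|b|.
Proof.
move=> a0 ab; apply: normr_vle_labs; rewrite !labs_id //; exact: vle_trans ab.
Qed.

Lemma ppart_ge0 x : 0 ⊑ join x 0.
Proof. exact: vleUr. Qed.

Lemma npartE x : join (- x) 0 = join x 0 - x.
Proof. by rewrite -ljoinDr subrr sub0r ljoinC. Qed.

Lemma ppart_npart x : x = join x 0 - join (- x) 0.
Proof. by rewrite npartE opprB addrC subrK. Qed.

Lemma lmeet_ppart_npart x : meet (join x 0) (join (- x) 0) = 0.
Proof.
rewrite npartE -[X in meet X _]add0r -[X in meet _ X]addrC lmeetDr.
by rewrite /lmeet oppr0 opprK ljoinC addrC subrr.
Qed.

Lemma ppart_eq0 x : join x 0 = 0 <-> x ⊑ 0.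
Proof. by split=> [<-|]; [apply: vleUl|apply: ljoin_r]. Qed.

Lemma ppart_le_labs x : join x 0 ⊑ abs x.
Proof. by apply: vleUx; [apply: labs_ge|apply: labs_ge0]. Qed.

Lemma normr_ppart x : `|join x 0| <= `|x|.
Proof. by rewrite -(normr_labs x); apply: normr_vle; [apply: ppart_ge0|apply: ppart_le_labs]. Qed.

(* Monotonicity of the lattice norm makes the order Archimedean: [join w 0] has
   arbitrarily small norm. *)
Lemma vle0_archimedean {x w} : 0 ⊑ x -> (forall e : R, 0 < e -> w ⊑ e *: x) -> w ⊑ 0.
Proof.
move=> x0 wx; apply/ppart_eq0/normr0_eq0/eqP.
rewrite eq_le normr_ge0 andbT; apply/ler_addgt0Pr => e e0; rewrite add0r.
have xe : 0 < `|x| + 1 by rewrite ltr_pwDr.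
have ex0 : 0 <= e / (`|x| + 1) by rewrite divr_ge0 ?ltW.
have wex : join w 0 ⊑ (e / (`|x| + 1)) *: x.
  rewrite -(ljoin_l (vscaler_ge0 _ _ ex0 x0)); apply: vle_join2; last exact: vle_refl.
  by apply: wx; rewrite divr_gt0.
apply: le_trans (normr_vle (ppart_ge0 _) wex) _.
rewrite normrZ ger0_norm // mulrAC ler_pdivrMr // ler_pM2l //; lra.
Qed.

Lemma sup_scale_vle (S : set R) x y : 0 ⊑ x -> has_sup S ->
  (forall t, S t -> t *: x ⊑ y) -> sup S *: x ⊑ y.
Proof.
move=> x0 supS Sxy; apply/vsubr_le0; apply: (vle0_archimedean x0) => e e0.
have [t St ltt] := sup_adherent e0 supS.
have tS : t <= sup S by apply: sup_upper_bound.
rewrite -[sup S *: x](subrK (t *: x)) -scalerBl -addrA -[e *: x]addr0.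
apply: vleD; last by apply/vsubr_le0; apply: Sxy.
by apply: vleZ2r => //; lra.
Qed.

Lemma lmeet_ge0 {x y} : 0 ⊑ x -> 0 ⊑ y -> 0 ⊑ meet x y.
Proof. exact: vlexI. Qed.

Lemma lmeetZ_eq0 a b (s r : R) : 0 ⊑ a -> 0 ⊑ b -> meet a b = 0 ->
  0 <= s -> 0 <= r -> meet (s *: a) (r *: b) = 0.
Proof.
move=> a0 b0 ab s0 r0; apply: vle_anti; last by apply: lmeet_ge0; apply: vscaler_ge0.
rewrite -(scaler0 _ (Num.max s r)) -ab -lmeetZ; last by rewrite le_max s0.
by apply: vle_meet2; apply: vleZ2r; rewrite // le_max lexx ?orbT.
Qed.

Lemma lmeet_sum_eq0 (I : Type) (r : seq I) (P : pred I) (F : I -> E) y :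
  0 ⊑ y -> (forall i, P i -> 0 ⊑ F i /\ meet (F i) y = 0) ->
  meet (\sum_(i <- r | P i) F i) y = 0.
Proof.
move=> y0 F0.
suff [] : 0 ⊑ \sum_(i <- r | P i) F i /\ meet (\sum_(i <- r | P i) F i) y = 0 by [].
apply: (big_ind (fun s => 0 ⊑ s /\ meet s y = 0)) => //; first by split; [apply: vle_refl|apply: lmeet_l].
move=> u v [u0 uy] [v0 vy]; split; first exact: vaddr_ge0.
apply: vle_anti; last by apply: lmeet_ge0 => //; apply: vaddr_ge0.
by rewrite -[0]addr0 -{1}uy -vy; apply: vle_meetDl.
Qed.

(** * Atoms and disjoint sequences *)

Definition atom a := [/\ 0 ⊑ a, a <> 0 &
  forall y, 0 ⊑ y -> y ⊑ a -> exists t : R, y = t *: a].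

Definition disjoint_seq (d : nat -> E) :=
  (forall n, 0 ⊑ d n /\ d n <> 0) /\ (forall n m, n <> m -> meet (d n) (d m) = 0).

Definition disjoint_below z a b :=
  [/\ 0 ⊑ a, 0 ⊑ b, a <> 0, b <> 0 & [/\ meet a b = 0, a ⊑ z & b ⊑ z]].

Lemma disjoint_seq_lt (d : nat -> E) : (forall n, 0 ⊑ d n /\ d n <> 0) ->
  (forall n m, (n < m)%N -> meet (d n) (d m) = 0) -> disjoint_seq d.
Proof.
move=> d0 dlt; split=> // n m /eqP; rewrite neq_ltn => /orP[/dlt //|/dlt].
by rewrite lmeetC.
Qed.

Lemma incomparable_disjoint_below x y (t : R) : 0 ⊑ y -> y ⊑ x -> 0 <= t <= 1 ->
  ~ y ⊑ t *: x -> ~ t *: x ⊑ y ->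
  disjoint_below x (join (y - t *: x) 0) (join (t *: x - y) 0).
Proof.
move=> y0 yx /andP[t0 t1] ytx txy.
have tx0 : 0 ⊑ t *: x by apply: vscaler_ge0 => //; apply: vle_trans yx.
split; [exact: ppart_ge0|exact: ppart_ge0|by move/ppart_eq0/vsubr_le0|by move/ppart_eq0/vsubr_le0|].
split; first by rewrite -[t *: x - y]opprB lmeet_ppart_npart.
- apply: vleUx; last by apply: vle_trans yx.
  apply: vle_trans yx; rewrite -[X in _ ⊑ X]subr0; exact/vleD2l/vleN2.
- apply: vleUx; last by apply: vle_trans yx.
  apply: (vle_trans (y := t *: x)); first by rewrite -[X in _ ⊑ X]subr0; exact/vleD2l/vleN2.
  by rewrite -[X in _ ⊑ X]scale1r; apply: vleZ2r => //; apply: vle_trans yx.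
Qed.

(* [y] is the multiple of [x] by the supremum of [t] with [t *: x ⊑ y]. *)
Lemma comparable_scale {x y} : 0 ⊑ y -> y ⊑ x ->
  (forall t : R, 0 <= t <= 1 -> y ⊑ t *: x \/ t *: x ⊑ y) ->
  exists c : R, y = c *: x.
Proof.
move=> y0 yx cmp; have x0 : 0 ⊑ x by apply: vle_trans yx.
pose S := [set t : R | 0 <= t <= 1 /\ t *: x ⊑ y].
have S0 : S 0 by rewrite /S /= lexx ler01 scale0r.
have supS : has_sup S by split; [exists 0|exists 1 => t [/andP[]]].
have c0 : 0 <= sup S by apply: sup_upper_bound.
have c1 : sup S <= 1 by apply: ge_sup; [exists 0|move=> t [/andP[]]].
exists (sup S); apply: vle_anti; last by apply: sup_scale_vle => // t [].
have [->|c1'] := eqVneq (sup S) 1; first by rewrite scale1r.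
apply/vsubr_le0; apply: (vle0_archimedean x0) => e e0.
pose t := sup S + Num.min e (1 - sup S).
have ltct : sup S < t by rewrite /t ltrDl lt_min e0 subr_gt0 lt_neqAle c1' c1.
have t01 : 0 <= t <= 1.
  apply/andP; split; first by rewrite /t addr_ge0 // le_min ltW // subr_ge0.
  by rewrite /t -lerBrDl ge_min lexx orbT.
have yt : y ⊑ t *: x.
  have [//|txy] := cmp t t01.
  by have := sup_upper_bound supS (conj t01 txy); rewrite leNgt ltct.
rewrite -[y](subrK (t *: x)) -addrA -scalerBl -[e *: x]add0r.
apply: vleD; first exact/vsubr_le0.
by apply: vleZ2r => //; rewrite /t addrAC subrr add0r ge_min lexx.
Qed.

Lemma nonatom_disjoint_below {z} : 0 ⊑ z -> z <> 0 -> ~ atom z ->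
  exists a b, disjoint_below z a b.
Proof.
move=> z0 zn0 /not_and3P[//|//|/existsNP[y /not_implyP[y0 /not_implyP[yz /forallNP ynt]]]].
have [[t [t01 [nyt nty]]]|cmp] :=
    pselect (exists t : R, 0 <= t <= 1 /\ ~ y ⊑ t *: z /\ ~ t *: z ⊑ y).
  by exists (join (y - t *: z) 0), (join (t *: z - y) 0); apply: incomparable_disjoint_below.
suff [c yc] : exists c : R, y = c *: z by case: (ynt c).
apply: comparable_scale => // t t01.
by apply: contrapT => /not_orP nyt; apply: cmp; exists t.
Qed.

(* Splitting repeatedly the second half of a disjoint pair below [x] yields
   infinitely many disjoint pieces. *)
Lemma atomless_disjoint_seq {x} : 0 ⊑ x -> x <> 0 ->
  (forall z, 0 ⊑ z -> z <> 0 -> z ⊑ x -> ~ atom z) -> exists d, disjoint_seq d.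
Proof.
move=> x0 xn0 noatom.
have /choice[g gP] : forall z, exists p : E * E,
    0 ⊑ z -> z <> 0 -> z ⊑ x -> disjoint_below z p.1 p.2.
  move=> z.
  have [[z0 [zn0 zx]]|nz] := pselect (0 ⊑ z /\ z <> 0 /\ z ⊑ x); last first.
    by exists (0, 0) => z0 zn0 zx; case: nz.
  by have [a [b ab]] := nonatom_disjoint_below z0 zn0 (noatom z z0 zn0 zx); exists (a, b).
pose b n := iter n (fun z => (g z).2) x.
have b_below n : [/\ 0 ⊑ b n, b n <> 0 & b n ⊑ x].
  elim: n => [|n [b0 bn0 bx]]; first by split=> //; apply: vle_refl.
  by have [_ ? _ ? [_ _ ?]] := gP _ b0 bn0 bx; split=> //; apply: vle_trans bx.
have b_split n : disjoint_below (b n) (g (b n)).1 (b n.+1).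
  by have [] := b_below n; apply: gP.
have b_decr n m : (n <= m)%N -> b m ⊑ b n.
  move=> /subnK <-; elim: (m - n)%N => [|k IH]; first exact: vle_refl.
  by have [_ _ _ _ [_ _ ?]] := b_split (k + n)%N; apply: vle_trans IH.
exists (fun n => (g (b n)).1); apply: disjoint_seq_lt.
  by move=> n; have [? _ ? _ _] := b_split n.
move=> n m ltnm; have [a0 _ _ _ [ab _ _]] := b_split n.
have [am0 _ _ _ [_ amb _]] := b_split m.
apply: vle_anti; last exact: lmeet_ge0.
rewrite -ab; apply: vle_meet2; first exact: vle_refl.
exact: vle_trans amb (b_decr _ _ ltnm).
Qed.

Lemma atom_below {z} : ~ (exists d, disjoint_seq d) -> 0 ⊑ z -> z <> 0 ->
  exists a, atom a /\ a ⊑ z.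
Proof.
move=> nod z0 zn0; apply: contrapT => noatom; apply: nod.
apply: (atomless_disjoint_seq z0 zn0) => w w0 wn0 wz aw.
by apply: noatom; exists w.
Qed.

Definition disjoint_atoms (L : seq E) := [/\ uniq L, {in L, forall a, atom a} &
  {in L &, forall a b, a <> b -> meet a b = 0}].

Definition maximal_disjoint (L : seq E) :=
  forall z, 0 ⊑ z -> (forall a, a \in L -> meet a z = 0) -> z = 0.

Lemma disjoint_atoms_cons L b : disjoint_atoms L -> atom b ->
  (forall a, a \in L -> meet a b = 0) -> disjoint_atoms (b :: L).
Proof.
move=> [uL atL dL] bat bL; have bnL : b \notin L.
  by apply/negP => /bL; have [b0 bn0 _] := bat; rewrite lmeet_l //; apply: vle_refl.
split.
- by rewrite /= bnL.
- by move=> a; rewrite inE => /orP[/eqP ->|/atL].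
- move=> a c; rewrite !inE => /orP[/eqP ->|aL] /orP[/eqP ->|cL] ac //.
  + by rewrite lmeetC; apply: bL.
  + exact: bL.
  + exact: dL.
Qed.

(* Otherwise atoms disjoint from the previous ones could be chosen forever. *)
Lemma exists_maximal_disjoint_atoms : ~ (exists d, disjoint_seq d) ->
  exists L, disjoint_atoms L /\ maximal_disjoint L.
Proof.
move=> nod; apply: contrapT => nomax.
have /choice[g gP] : forall L, exists b,
    disjoint_atoms L -> atom b /\ forall a, a \in L -> meet a b = 0.
  move=> L; have [dL|ndL] := pselect (disjoint_atoms L); last by exists 0.
  have /existsNP[z /not_implyP[z0 /not_implyP[zL zn0]]] : ~ maximal_disjoint L.
    by move=> maxL; apply: nomax; exists L.
  have [b [[b0 bn0 bat] bz]] := atom_below nod z0 zn0.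
  exists b => _; split=> // a aL; have [_ /(_ a aL) [a0 _ _] _] := dL.
  apply: vle_anti; last exact: lmeet_ge0.
  by rewrite -(zL a aL); apply: vle_meet2 => //; apply: vle_refl.
pose l n := iter n (fun L => g L :: L) [::].
have l_atoms n : disjoint_atoms (l n).
  elim: n => [|n IH]; first by split.
  by have [] := gP _ IH; apply: disjoint_atoms_cons.
have l_mem n m : (n < m)%N -> g (l n) \in l m.
  elim: m => // m IH; rewrite ltnS leq_eqVlt => /orP[/eqP <-|/IH nm].
    by rewrite inE eqxx.
  by rewrite inE nm orbT.
apply: nod; exists (fun n => g (l n)); apply: disjoint_seq_lt.
  by move=> n; have [[? ? _] _] := gP _ (l_atoms n).
by move=> n m /l_mem nm; have [_ ->] := gP _ (l_atoms m).
Qed.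

Lemma max_multiple_below {a r} : 0 ⊑ a -> a <> 0 -> 0 ⊑ r ->
  exists2 tau : R, 0 <= tau & tau *: a ⊑ r /\ forall s, 0 < s -> ~ s *: a ⊑ r - tau *: a.
Proof.
move=> a0 an0 r0; pose S := [set s : R | 0 <= s /\ s *: a ⊑ r].
have S0 : S 0 by rewrite /S /= lexx scale0r.
have na : 0 < `|a| by rewrite normr_gt0; apply/eqP.
have supS : has_sup S.
  split; first by exists 0.
  exists (`|r| / `|a|) => s [s0 sar]; rewrite ler_pdivlMr //.
  by have := normr_vle (vscaler_ge0 _ _ s0 a0) sar; rewrite normrZ ger0_norm.
have tau0 : 0 <= sup S by apply: sup_upper_bound.
exists (sup S) => //; split; first by apply: sup_scale_vle => // s [].
move=> s s0 sar; have : s + sup S <= sup S.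
  apply: sup_upper_bound => //; split; first by rewrite addr_ge0 // ltW.
  by rewrite scalerDl -[r](subrK (sup S *: a)); apply: vleD2r.
by rewrite gerDr leNgt s0.
Qed.

Lemma atom_decomposition {L z} : {in L, forall a, atom a} -> 0 ⊑ z ->
  exists (t : nat -> R) r, [/\ z = \sum_(i < size L) t i *: L`_i + r,
    forall i, 0 <= t i, 0 ⊑ r & forall a (s : R), a \in L -> 0 < s -> ~ s *: a ⊑ r].
Proof.
elim: L z => [z _ z0|a L IH z atL z0].
  by exists (fun=> 0), z; rewrite big_ord0 add0r.
have [t [r [zr t0 r0 rL]]] := IH z (fun b bL => atL b (mem_behead (s := a :: L) bL)) z0.
have [a0 an0 _] := atL a (mem_head _ _).
have [tau tau0 [taur rmax]] := max_multiple_below a0 an0 r0.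
have r'r : r - tau *: a ⊑ r.
  by rewrite -[X in _ ⊑ X]subr0; apply/vleD2l/vleN2/vscaler_ge0.
exists (fun i => if i is i'.+1 then t i' else tau), (r - tau *: a); split.
- by rewrite big_ord_recl zr /= [RHS]addrC addrA subrK addrC.
- by case.
- exact/vsubr_ge0.
- move=> b s; rewrite inE => /orP[/eqP ->|bL] s0; first exact: rmax.
  by move=> sbr; apply: (rL b s bL s0); apply: vle_trans sbr r'r.
Qed.

(* The remainder of the atomic decomposition contains no multiple of an atom,
   hence is disjoint from [L]. *)
Lemma positive_span {L z} : {in L, forall a, atom a} -> maximal_disjoint L ->
  0 ⊑ z -> exists t : nat -> R,
  (forall i, 0 <= t i) /\ z = \sum_(i < size L) t i *: L`_i.
Proof.
move=> atL maxL z0; have [t [r [zr t0 r0 rL]]] := atom_decomposition atL z0.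
exists t; split => //; suff r_eq0 : r = 0 by rewrite zr r_eq0 addr0.
apply: maxL => // a aL; have [a0 _ aat] := atL a aL.
have [s ars] := aat _ (lmeet_ge0 a0 r0) (vleIl _ _).
apply: vle_anti; last exact: lmeet_ge0.
have [s0|] := ltrP 0 s; first by case: (rL a s aL s0); rewrite -ars; apply: vleIr.
by rewrite ars -(scale0r a); apply: vleZ2r.
Qed.

Lemma disjoint_atoms_span {L} : {in L, forall a, atom a} -> maximal_disjoint L ->
  forall x, exists c : nat -> R, x = \sum_(i < size L) c i *: L`_i.
Proof.
move=> atL maxL x.
have [t1 [_ xp]] := positive_span atL maxL (ppart_ge0 x).
have [t2 [_ xn]] := positive_span atL maxL (ppart_ge0 (- x)).
exists (fun i => t1 i - t2 i).
by rewrite {1}(ppart_npart x) xp xn -sumrB; apply: eq_bigr => i _; rewrite scalerBl.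
Qed.

(** * Excluding infinite disjoint sequences *)

Lemma labs_sum (I : Type) (r : seq I) (P : pred I) (F : I -> E) :
  abs (\sum_(i <- r | P i) F i) ⊑ \sum_(i <- r | P i) abs (F i).
Proof.
apply: (big_ind2 (fun x y => abs x ⊑ y)) => [|x1 x2 y1 y2 x1y1 x2y2|i _].
- by rewrite labs_id; apply: vle_refl.
- by apply: vle_trans (labs_add _ _) _; apply: vleD.
- exact: vle_refl.
Qed.

(* Disjoint pieces of [u] add up to their supremum, which stays below [u]. *)
Lemma disjoint_partial_sum_le {y : nat -> E} {u} :
  (forall n, 0 ⊑ y n /\ y n ⊑ u) ->
  (forall n m, n <> m -> meet (y n) (y m) = 0) ->
  forall N, \sum_(k < N) y k ⊑ u.
Proof.
move=> yu ydisj; elim=> [|N IH].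
  by rewrite big_ord0; have [y0 y0u] := yu 0%N; apply: vle_trans y0u.
have sum_yN : meet (\sum_(k < N) y k) (y N) = 0.
  apply: lmeet_sum_eq0 => [|k _]; first by case: (yu N).
  split; first by case: (yu k).
  by apply: ydisj => kN; move: (ltn_ord k); rewrite kN ltnn.
rewrite big_ord_recr /= -ljoin_lmeet sum_yN addr0; apply: vleUx => //.
by case: (yu N).
Qed.

Lemma disjoint_functional_cvg0 (f : E -> R) (y : nat -> E) u :
  (forall u v, f (u + v) = f u + f v) -> (forall (a : R) u, f (a *: u) = a * f u) ->
  continuous f -> (forall n, 0 ⊑ y n /\ y n ⊑ u) ->
  (forall n m, n <> m -> meet (y n) (y m) = 0) -> (fun n => f (y n)) @ \oo --> 0.
Proof.
move=> fD fZ fc yu ydisj; apply: norm_cvg0.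
have [C C0 fC] := continuous_functional_bounded fD fZ fc.
apply: nonneg_bounded_series_cvg0 => [n|]; first exact: normr_ge0.
exists (C * `|u|) => N; under eq_bigr do rewrite normrEsg -fZ.
rewrite -(functional_sum fD fZ); apply: le_trans (ler_norm _) _.
apply: le_trans (fC _) _; rewrite ler_wpM2l //.
have u0 : 0 ⊑ u by have [y0 y0u] := yu 0%N; apply: vle_trans y0u.
apply: normr_vle_labs; rewrite (labs_id u0).
apply: (vle_trans (y := \sum_(k < N) y k)); last exact: disjoint_partial_sum_le yu ydisj N.
apply: vle_trans (labs_sum _ _ _ _) _.
apply: vle_sum => k _; have [yk0 _] := yu k; rewrite labsZ // normr_sg.
by rewrite -[X in _ ⊑ X]scale1r; apply: vleZ2r; rewrite // lern1 leq_b1.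
Qed.

Lemma disjoint_uaw_null {d : nat -> E} : (forall n, 0 ⊑ d n) ->
  (forall n m, n <> m -> meet (d n) (d m) = 0) -> uaw_cvg le join d 0.
Proof.
move=> d0 ddisj u u0 f fD fZ fc; rewrite (functional0 fD fZ).
under eq_fun do rewrite subr0 (labs_id (d0 _)).
apply: (disjoint_functional_cvg0 _ _ u fD fZ fc) => [n|n m nm].
  by split; [apply: lmeet_ge0|apply: vleIr].
apply: vle_anti; last by apply: lmeet_ge0; apply: lmeet_ge0.
by rewrite -(ddisj n m nm); apply: vle_meet2; apply: vleIl.
Qed.

Lemma uaw_dunford_pettis_no_disjoint_seq :
  uaw_dunford_pettis le join id -> ~ exists d, disjoint_seq d.
Proof.
move=> DP [d [dpos ddisj]].
have nd n : 0 < `|d n| by rewrite normr_gt0; apply/eqP; case: (dpos n).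
pose x n := `|d n|^-1 *: d n.
have xn n : `|x n| = 1 by rewrite normrZ ger0_norm ?invr_ge0 ?ltW // mulVf ?gt_eqF.
have x0 n : 0 ⊑ x n by apply: vscaler_ge0; [rewrite invr_ge0 ltW|case: (dpos n)].
have xdisj n m : n <> m -> meet (x n) (x m) = 0.
  move=> nm; have [[dn0 _] [dm0 _]] := (dpos n, dpos m).
  by apply: lmeetZ_eq0; rewrite ?invr_ge0 ?ltW //; apply: ddisj.
have xb : norm_bounded x by exists 1 => n; rewrite xn.
have := DP x xb (disjoint_uaw_null x0 xdisj).
under eq_fun do rewrite xn.
by move=> /(cvg_lim (@Rhausdorff R)); rewrite lim_cst // => /eqP; rewrite oner_eq0.
Qed.

Lemma disjoint_free {k} {d : 'I_k -> E} {w : 'I_k -> R} :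
  (forall i, 0 ⊑ d i /\ d i <> 0) -> (forall i j, i != j -> meet (d i) (d j) = 0) ->
  \sum_i w i *: d i = 0 -> forall j, w j = 0.
Proof.
move=> dpos ddisj wd0 j; have [dj0 djn0] := dpos j.
pose T := \sum_(i | i != j) `|w i| *: d i.
have wjT : `|w j| *: d j ⊑ T.
  move: wd0; rewrite (bigD1 j) //= => /eqP; rewrite addr_eq0 => /eqP wdj.
  rewrite -labsZ // wdj labsN; apply: vle_trans (labs_sum _ _ _ _) _.
  by apply: vle_sum => i _; rewrite labsZ //; [apply: vle_refl|case: (dpos i)].
have Tdj : meet T (`|w j| *: d j) = 0.
  rewrite -[T]scale1r; apply: lmeetZ_eq0 => //.
  - by apply: vsumr_ge0 => i _; apply: vscaler_ge0 => //; case: (dpos i).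
  - apply: lmeet_sum_eq0 => // i ij; have [di0 _] := dpos i.
    split; first exact: vscaler_ge0.
    by rewrite -[d j]scale1r; apply: lmeetZ_eq0 => //; apply: ddisj.
have : `|w j| *: d j = 0.
  apply: vle_anti; last exact: vscaler_ge0.
  by rewrite -Tdj; apply: vlexI => //; apply: vle_refl.
by move/eqP; rewrite scaler_eq0 normr_eq0 => /orP[/eqP|/eqP].
Qed.

Lemma finite_dimensional_no_disjoint_seq :
  finite_dimensional E -> ~ exists d, disjoint_seq d.
Proof.
move=> [n [b bspan]] [d [dpos ddisj]].
have [w wn0 wd0] := span_dependent b (fun i : 'I_n.+1 => d i) (fun i => bspan (d i)).
have ddisj' (i j : 'I_n.+1) : i != j -> meet (d i) (d j) = 0.
  by move=> ij; apply: ddisj => /val_inj/eqP; apply/negP.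
have w0 := disjoint_free (fun i => dpos i) ddisj' wd0.
by move/eqP: wn0; apply; apply/rowP => i; rewrite w0 mxE.
Qed.

(** * Coordinates along a maximal disjoint family of atoms *)

Section AtomicCoordinates.
Variable L : seq E.
Hypotheses (dL : disjoint_atoms L) (maxL : maximal_disjoint L).

Definition coord x : 'I_(size L) -> R :=
  get (fun c : 'I_(size L) -> R => x = \sum_(i < size L) c i *: L`_i).

Lemma atom_nth (i : 'I_(size L)) : 0 ⊑ L`_i /\ L`_i <> 0.
Proof. by have [_ atL _] := dL; have [] := atL _ (mem_nth 0 (ltn_ord i)). Qed.

Lemma coordP x : x = \sum_(i < size L) coord x i *: L`_i.
Proof.
have [_ atL _] := dL; have [c xc] := disjoint_atoms_span atL maxL x.
exact: (getPex (ex_intro (fun c : 'I_(size L) -> R => x = \sum_(i < size L) c i *: L`_i) (fun i => c i) xc)).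
Qed.

Lemma coord_unique {x} (c : 'I_(size L) -> R) :
  x = \sum_(i < size L) c i *: L`_i -> forall i, coord x i = c i.
Proof.
move=> xc i; apply/eqP; rewrite -subr_eq0; apply/eqP; move: i.
have [uL _ disjL] := dL; apply: (disjoint_free atom_nth).
  move=> i j ij; apply: disjL; rewrite ?mem_nth //.
  by apply/eqP; rewrite nth_uniq // (inj_eq val_inj).
under eq_bigr do rewrite scalerBl.
by rewrite sumrB -coordP -xc subrr.
Qed.

Lemma coordD x y i : coord (x + y) i = coord x i + coord y i.
Proof.
apply: (coord_unique (fun j => coord x j + coord y j)); under eq_bigr do rewrite scalerDl.
by rewrite big_split -!coordP.
Qed.

Lemma coordZ (a : R) x i : coord (a *: x) i = a * coord x i.
Proof.
apply: (coord_unique (fun j => a * coord x j)); under eq_bigr do rewrite -scalerA.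
by rewrite -scaler_sumr -coordP.
Qed.

Lemma coord_ge0 {z} i : 0 ⊑ z -> 0 <= coord z i.
Proof.
have [_ atL _] := dL; move=> /(positive_span atL maxL) [t [t0 zt]].
by rewrite (coord_unique (fun i => t i) zt).
Qed.

Lemma coord_term_le {z} i : 0 ⊑ z -> coord z i *: L`_i ⊑ z.
Proof.
move=> z0; rewrite [X in _ ⊑ X]coordP; apply: (vle_sum_term (F := fun j => coord z j *: L`_j)).
by move=> j; apply: vscaler_ge0; [apply: coord_ge0|case: (atom_nth j)].
Qed.

Lemma coord_norm_le {z} i : 0 ⊑ z -> coord z i * `|L`_i| <= `|z|.
Proof.
move=> z0; have [Li0 _] := atom_nth i.
have := normr_vle (vscaler_ge0 _ _ (coord_ge0 i z0) Li0) (coord_term_le i z0).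
by rewrite normrZ ger0_norm // coord_ge0.
Qed.

Lemma normr_coord_le z i : `|coord z i| * `|L`_i| <= 2 * `|z|.
Proof.
have coordB a b : coord (a - b) i = coord a i - coord b i.
  by rewrite coordD -scaleN1r coordZ mulN1r.
rewrite {1}(ppart_npart z) coordB.
apply: le_trans (ler_wpM2r (normr_ge0 _) (ler_normB _ _)) _.
have [cp cn] := (coord_ge0 i (ppart_ge0 z), coord_ge0 i (ppart_ge0 (- z))).
rewrite !ger0_norm // mulrDl mulr_natl mulr2n.
apply: lerD; apply: le_trans (coord_norm_le i (ppart_ge0 _)) _; first exact: normr_ppart.
by rewrite -(normrN z); apply: normr_ppart.
Qed.

Definition mass z := \sum_(i < size L) coord z i * `|L`_i|.

Lemma massD z w : mass (z + w) = mass z + mass w.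
Proof. by rewrite /mass -big_split; apply: eq_bigr => i _; rewrite coordD mulrDl. Qed.

Lemma massZ (a : R) z : mass (a *: z) = a * mass z.
Proof. by rewrite /mass mulr_sumr; apply: eq_bigr => i _; rewrite coordZ mulrA. Qed.

Lemma mass_continuous : continuous mass.
Proof.
apply: (bounded_functional_continuous massD massZ); exists ((size L)%:R * 2) => z.
rewrite -mulrA mulr_natl -[X in _ *+ X](card_ord (size L)) -sumr_const.
apply: le_trans (ler_norm_sum _ _ _) (ler_sum _ _) => i _.
by rewrite normrM normr_id; apply: normr_coord_le.
Qed.

Lemma normr_le_mass z : 0 ⊑ z -> `|z| <= mass z.
Proof.
move=> z0; rewrite {1}(coordP z); apply: le_trans (ler_norm_sum _ _ _) _.
by apply: ler_sum => i _; rewrite normrZ ger0_norm // coord_ge0.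
Qed.

Definition atom_unit := \sum_(i < size L) `|L`_i|^-1 *: L`_i.

Lemma atom_unit_ge0 : 0 ⊑ atom_unit.
Proof.
by apply: vsumr_ge0 => i _; have [Li0 _] := atom_nth i; apply: vscaler_ge0; rewrite ?invr_ge0.
Qed.

Lemma vle_atom_unit {z} : 0 ⊑ z -> z ⊑ `|z| *: atom_unit.
Proof.
move=> z0; rewrite {1}(coordP z) scaler_sumr; apply: vle_sum => i _.
have [Li0 /eqP]:= atom_nth i; rewrite -normr_gt0 => Lipos.
rewrite scalerA; apply: vleZ2r => //.
by rewrite ler_pdivlMr // coord_norm_le.
Qed.

End AtomicCoordinates.

Lemma disjoint_atoms_finite_dimensional L :
  {in L, forall a, atom a} -> maximal_disjoint L -> finite_dimensional E.
Proof.
move=> atL maxL; exists (size L), (fun i => L`_i) => x.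
by have [c xc] := disjoint_atoms_span atL maxL x; exists (fun i => c i).
Qed.

Lemma disjoint_atoms_uaw_dunford_pettis L :
  disjoint_atoms L -> maximal_disjoint L -> uaw_dunford_pettis le join id.
Proof.
move=> dL maxL x [M xM] xuaw; have M0 : 0 <= M by apply: le_trans (xM 0%N).
pose u := atom_unit L; have u0 : 0 ⊑ u := atom_unit_ge0 L dL.
pose y n := meet (abs (x n)) u.
have y_cvg : (fun n => mass L (y n)) @ \oo --> 0.
  have := xuaw u u0 _ (massD L dL maxL) (massZ L dL maxL) (mass_continuous L dL maxL).
  by rewrite (functional0 (massD L dL maxL) (massZ L dL maxL)); under eq_fun do rewrite subr0.
have xy n : `|x n| <= (M + 1) * mass L (y n).
  have ax0 := labs_ge0 (x n).
  have axu : abs (x n) ⊑ (M + 1) *: u.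
    apply: vle_trans (vle_atom_unit L dL maxL ax0) _; rewrite normr_labs.
    by apply: vleZ2r => //; have := xM n; lra.
  have axy : abs (x n) ⊑ (M + 1) *: y n.
    rewrite -(lmeet_l axu) /y -lmeetZ; last lra.
    apply: vle_meet2; last exact: vle_refl.
    by rewrite -[X in X ⊑ _]scale1r; apply: vleZ2r => //; lra.
  rewrite -normr_labs; apply: le_trans (normr_vle ax0 axy) _.
  rewrite normrZ ger0_norm; last lra.
  apply: ler_wpM2l; first lra.
  by apply: normr_le_mass => //; apply: lmeet_ge0.
have xy_cvg : (fun n => (M + 1) * mass L (y n)) @ \oo --> 0.
  by rewrite -(mulr0 (M + 1)); apply: cvgMl_tmp.
apply: (squeeze_cvgr _ (cvg_cst 0) xy_cvg).
by near=> n; rewrite normr_ge0 xy.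
Unshelve. all: by end_near.
Qed.

End VectorLattice.

Theorem corollary2p27 (R : realType) (E : completeNormedModType R)
  (le : E -> E -> Prop) (join : E -> E -> E) :
  is_banach_lattice le join ->
  (uaw_dunford_pettis le join (fun x : E => x) <-> finite_dimensional E).
Proof.
move=> HB; split.
  move=> /(uaw_dunford_pettis_no_disjoint_seq HB)/(exists_maximal_disjoint_atoms HB).
  by case=> L [[_ atL _] maxL]; apply: disjoint_atoms_finite_dimensional atL maxL.
move=> /(finite_dimensional_no_disjoint_seq HB)/(exists_maximal_disjoint_atoms HB).
by case=> L [dL maxL]; apply: disjoint_atoms_uaw_dunford_pettis dL maxL.
Qed.
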